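(* Let $(X,\tau)$ be a topological space and let $\delta_1,\delta_2$ be quasi-proximities compatible with $\tau$ such that $\delta_1$ is coarser than $\delta_2$ and both $\mathcal{V}_{\delta_1}$ and $\mathcal{V}_{\delta_2}$ are transitive. If $|\pi(\delta_1)\cap T(\tau)|>1$, then $|\pi(\delta_2)\cap T(\tau)|>1$.
   Context: Quasi-uniformities and quasi-proximities are in the sense of Fletcher–Lindgren. $\delta_1$ coarser than $\delta_2$ means that whenever $A\,\delta_2\,B$ then $A\,\delta_1\,B$ (equivalently $\mathcal{V}_{\delta_1}\subseteq\mathcal{V}_{\delta_2}$). $\pi(\delta)$ is the set of quasi-uniformities inducing $\delta$ and $\mathcal{V}_\delta$ is its coarsest (totally bounded) element. $T(\tau)$ is the set of quasi-uniformities compatible with $\tau$ that have a base of transitive entourages. *)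

From Stdlib Require Import List.
Import ListNotations.

Definition set (X : Type) := X -> Prop.
Definition rel (X : Type) := X -> X -> Prop.

Definition setU {X} (A B : set X) : set X := fun x => A x \/ B x.
Definition setC {X} (A : set X) : set X := fun x => ~ A x.
Definition set1 {X} (x : X) : set X := fun y => y = x.
Definition set0 {X} : set X := fun _ => False.

Definition is_topology {X} (tau : set X -> Prop) : Prop :=
  tau (fun _ => True) /\ tau set0 /\
  (forall G H, tau G -> tau H -> tau (fun x => G x /\ H x)) /\
  (forall F : set X -> Prop, (forall G, F G -> tau G) ->
      tau (fun x => exists G, F G /\ G x)).

(* Relational composition: (x,z) in V o W iff exists y, (x,y) in W... 
   we only use V o V, so orientation is irrelevant. *)
Definition rcomp {X} (V W : rel X) : rel X := fun x z => exists y, V x y /\ W y z.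
Definition rsub {X} (U V : rel X) : Prop := forall x y, U x y -> V x y.

Definition is_quasi_uniformity {X} (Q : rel X -> Prop) : Prop :=
  Q (fun _ _ => True) /\
  (forall U V, Q U -> rsub U V -> Q V) /\
  (forall U V, Q U -> Q V -> Q (fun x y => U x y /\ V x y)) /\
  (forall U, Q U -> forall x, U x x) /\
  (forall U, Q U -> exists V, Q V /\ rsub (rcomp V V) U).

Definition qu_compatible {X} (Q : rel X -> Prop) (tau : set X -> Prop) : Prop :=
  forall G, tau G <-> (forall x, G x -> exists U, Q U /\ forall y, U x y -> G y).

Definition qu_transitive {X} (Q : rel X -> Prop) : Prop :=
  forall U, Q U -> exists V, Q V /\ rsub V U /\
    (forall x y z, V x y -> V y z -> V x z).

Definition in_T {X} (tau : set X -> Prop) (Q : rel X -> Prop) : Prop :=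
  is_quasi_uniformity Q /\ qu_compatible Q tau /\ qu_transitive Q.

Definition is_quasi_proximity {X} (d : set X -> set X -> Prop) : Prop :=
  (forall A B C, d A (setU B C) <-> (d A B \/ d A C)) /\
  (forall A B C, d (setU A B) C <-> (d A C \/ d B C)) /\
  (forall A, ~ d set0 A) /\ (forall A, ~ d A set0) /\
  (forall x, d (set1 x) (set1 x)) /\
  (forall A B, ~ d A B -> exists C, ~ d A C /\ ~ d (setC C) B).

(* Topology induced by a quasi-proximity: cl A = {x | {x} d A}. *)
Definition qp_compatible {X} (d : set X -> set X -> Prop) (tau : set X -> Prop) : Prop :=
  forall G, tau G <-> (forall x, G x -> ~ d (set1 x) (setC G)).

Definition qp_coarser {X} (d1 d2 : set X -> set X -> Prop) : Prop :=
  forall A B, d2 A B -> d1 A B.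

Definition qu_prox {X} (Q : rel X -> Prop) : set X -> set X -> Prop :=
  fun A B => forall U, Q U -> exists x y, A x /\ B y /\ U x y.

Definition in_pi {X} (d : set X -> set X -> Prop) (Q : rel X -> Prop) : Prop :=
  is_quasi_uniformity Q /\ forall A B, qu_prox Q A B <-> d A B.

(* V_d : the quasi-uniformity with subbase
   U_{A,B} = ((X\A) x X) u (X x (X\B)) for A non-d B. *)
Definition Vdelta {X} (d : set X -> set X -> Prop) : rel X -> Prop :=
  fun W => exists l : list (set X * set X),
    Forall (fun p => ~ d (fst p) (snd p)) l /\
    forall x y, Forall (fun p => ~ fst p x \/ ~ snd p y) l -> W x y.

Definition two_in_pi_T {X} (d : set X -> set X -> Prop) (tau : set X -> Prop) : Prop :=
  exists Q1 Q2, in_pi d Q1 /\ in_T tau Q1 /\ in_pi d Q2 /\ in_T tau Q2 /\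
    ~ (forall W, Q1 W <-> Q2 W).

(* Since V_δ1 is the coarsest member of π(δ1), the hypothesis yields some Q in
   π(δ1) ∩ T(τ) strictly finer than V_δ1.  Both V_δ2 and the join Q ∨ V_δ2 lie in
   π(δ2) ∩ T(τ); the join still induces δ2 because δ2-near sets are δ1-near.
   They differ: otherwise Q ⊆ V_δ2 would be totally bounded, and a totally
   bounded member of π(δ1) with a transitive base lies inside V_δ1.  Indeed, if V
   is transitive and E_1, ..., E_n is a finite cover by V-small sets, each E_i is
   δ1-far from the complement of V[E_i], and the subbasic entourages of these
   pairs intersect inside V. *)

From Stdlib Require Import List Classical FunctionalExtensionality PropExtensionality.
Import ListNotations.

Definition far {X} (d : set X -> set X -> Prop) (p : set X * set X) : Prop :=
  ~ d (fst p) (snd p).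

Definition Upairs {X} (l : list (set X * set X)) : rel X :=
  fun x y => Forall (fun p => ~ fst p x \/ ~ snd p y) l.

Definition qu_join {X} (Q1 Q2 : rel X -> Prop) : rel X -> Prop :=
  fun R => exists U W, Q1 U /\ Q2 W /\ rsub (fun x y => U x y /\ W x y) R.

Definition small_cover {X} (U : rel X) (Es : list (set X)) : Prop :=
  (forall x, exists E, In E Es /\ E x) /\
  (forall E, In E Es -> forall x y, E x -> E y -> U x y).

Definition qu_totally_bounded {X} (Q : rel X -> Prop) : Prop :=
  forall U, Q U -> exists Es, small_cover U Es.

Lemma Upairs_cons {X} (C D : set X) l x y :
  Upairs ((C, D) :: l) x y <-> (~ C x \/ ~ D y) /\ Upairs l x y.
Proof. apply Forall_cons_iff. Qed.

Lemma Upairs_app {X} (l1 l2 : list (set X * set X)) x y :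
  Upairs (l1 ++ l2) x y <-> Upairs l1 x y /\ Upairs l2 x y.
Proof. apply Forall_app. Qed.

Section QuasiUniformity.
Context {X : Type}.
Implicit Types (Q : rel X -> Prop) (tau : set X -> Prop) (U W : rel X).

Lemma qu_transitive_comp Q :
  qu_transitive Q -> forall U, Q U -> exists V, Q V /\ rsub (rcomp V V) U.
Proof.
  intros trans U QU.
  destruct (trans U QU) as (V & QV & VU & transV).
  exists V; split; [exact QV |].
  intros x z (y & Vxy & Vyz); eauto.
Qed.

Lemma qu_interior_open Q tau W x :
  is_quasi_uniformity Q -> qu_compatible Q tau ->
  tau (fun y => exists U, Q U /\ forall z, U y z -> W x z).
Proof.
  intros (_ & _ & _ & _ & comp) compat.
  apply compat; intros y (U & QU & UW).
  destruct (comp U QU) as (V & QV & VVU).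
  exists V; split; [exact QV |].
  intros z Vyz; exists V; split; [exact QV |].
  intros w Vzw; apply UW, VVU; exists z; auto.
Qed.

Lemma qu_compatible_nbhd Q1 Q2 tau W x :
  is_quasi_uniformity Q2 -> qu_compatible Q1 tau -> qu_compatible Q2 tau ->
  Q2 W -> exists U, Q1 U /\ forall y, U x y -> W x y.
Proof.
  intros qu2 compat1 compat2 QW.
  pose proof (qu_interior_open Q2 tau W x qu2 compat2) as open_int.
  destruct (proj1 (compat1 _) open_int x) as (U & QU & Uint).
  - exists W; auto.
  - exists U; split; [exact QU |].
    destruct qu2 as (_ & _ & _ & refl & _).
    intros y Uxy; destruct (Uint y Uxy) as (U' & QU' & U'W).
    apply U'W, (refl U' QU').
Qed.

Lemma qu_join_l Q1 Q2 U : is_quasi_uniformity Q2 -> Q1 U -> qu_join Q1 Q2 U.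
Proof.
  intros (top & _) QU; exists U, (fun _ _ => True).
  split; [exact QU | split; [exact top |]].
  intros x y []; assumption.
Qed.

Lemma qu_join_r Q1 Q2 W : is_quasi_uniformity Q1 -> Q2 W -> qu_join Q1 Q2 W.
Proof.
  intros (top & _) QW; exists (fun _ _ => True), W.
  split; [exact top | split; [exact QW |]].
  intros x y []; assumption.
Qed.

Lemma qu_join_qu Q1 Q2 :
  is_quasi_uniformity Q1 -> is_quasi_uniformity Q2 ->
  is_quasi_uniformity (qu_join Q1 Q2).
Proof.
  intros qu1 qu2.
  destruct qu1 as (top1 & _ & cap1 & refl1 & comp1).
  destruct qu2 as (top2 & _ & cap2 & refl2 & comp2).
  split; [| split; [| split; [| split]]].
  - exists (fun _ _ => True), (fun _ _ => True).
    split; [exact top1 | split; [exact top2 | intros x y _; exact I]].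
  - intros R R' (U & W & QU & QW & sub) RR'.
    exists U, W; split; [exact QU | split; [exact QW |]].
    intros x y h; apply RR', sub, h.
  - intros R R' (U & W & QU & QW & sub) (U' & W' & QU' & QW' & sub').
    exists (fun x y => U x y /\ U' x y), (fun x y => W x y /\ W' x y).
    split; [apply cap1; assumption | split; [apply cap2; assumption |]].
    intros x y [[] []]; split; [apply sub | apply sub']; split; assumption.
  - intros R (U & W & QU & QW & sub) x.
    apply sub; split; [apply refl1 | apply refl2]; assumption.
  - intros R (U & W & QU & QW & sub).
    destruct (comp1 U QU) as (U' & QU' & UU).
    destruct (comp2 W QW) as (W' & QW' & WW).
    exists (fun x y => U' x y /\ W' x y); split.
    + exists U', W'; split; [exact QU' | split; [exact QW' | intros a b h; exact h]].
    + intros x z (y & [] & []); apply sub; split;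
        [apply UU | apply WW]; exists y; auto.
Qed.

Lemma qu_join_transitive Q1 Q2 :
  qu_transitive Q1 -> qu_transitive Q2 -> qu_transitive (qu_join Q1 Q2).
Proof.
  intros trans1 trans2 R (U & W & QU & QW & sub).
  destruct (trans1 U QU) as (U' & QU' & UU & transU).
  destruct (trans2 W QW) as (W' & QW' & WW & transW).
  exists (fun x y => U' x y /\ W' x y); split; [| split].
  - exists U', W'; split; [exact QU' | split; [exact QW' | intros a b h; exact h]].
  - intros x y []; apply sub; auto.
  - intros x y z [] []; eauto.
Qed.

Lemma qu_join_compatible Q1 Q2 tau :
  is_quasi_uniformity Q1 -> is_quasi_uniformity Q2 ->
  qu_compatible Q1 tau -> qu_compatible Q2 tau -> qu_compatible (qu_join Q1 Q2) tau.
Proof.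
  intros qu1 qu2 compat1 compat2 G; split.
  - intros openG x Gx.
    destruct (proj1 (compat1 G) openG x Gx) as (U & QU & UG).
    exists U; split; [apply qu_join_l |]; assumption.
  - intros joinG; apply compat1; intros x Gx.
    destruct (joinG x Gx) as (R & (U & W & QU & QW & sub) & RG).
    destruct (qu_compatible_nbhd Q1 Q2 tau W x qu2 compat1 compat2 QW)
      as (U' & QU' & U'W).
    destruct qu1 as (_ & _ & cap1 & _).
    exists (fun a b => U a b /\ U' a b); split; [auto |].
    intros y []; apply RG, sub; auto.
Qed.

End QuasiUniformity.

Section QuasiProximity.
Context {X : Type} {d : set X -> set X -> Prop}.
Hypothesis qp_d : is_quasi_proximity d.

Lemma qp_mono A A' B B' :
  (forall x, A x -> A' x) -> (forall y, B y -> B' y) -> d A B -> d A' B'.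
Proof.
  destruct qp_d as (addr & addl & _).
  intros AA' BB' dAB.
  assert (eA : A' = setU A A').
  { apply functional_extensionality; intro x.
    apply propositional_extensionality; unfold setU; intuition. }
  assert (eB : B' = setU B B').
  { apply functional_extensionality; intro y.
    apply propositional_extensionality; unfold setU; intuition. }
  rewrite eA, eB; apply addr; left; apply addl; left; exact dAB.
Qed.

Lemma qp_far_disjoint C D : ~ d C D -> forall x, ~ (C x /\ D x).
Proof.
  destruct qp_d as (_ & _ & _ & _ & point & _).
  intros farCD x [Cx Dx]; apply farCD.
  apply (qp_mono (set1 x) _ (set1 x)); [| | apply point];
    intros y ->; assumption.
Qed.

Lemma qp_nonempty A B : d A B -> (exists x, A x) /\ (exists y, B y).
Proof.
  destruct qp_d as (_ & _ & empty_l & empty_r & _).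
  intros dAB; split; apply NNPP; intros noA.
  - apply (empty_l B); revert dAB; apply qp_mono; [| auto].
    intros x Ax; apply noA; exists x; exact Ax.
  - apply (empty_r A); revert dAB; apply qp_mono; [auto |].
    intros y By; apply noA; exists y; exact By.
Qed.

Lemma qp_split_l A B C :
  d A B -> d (fun x => A x /\ ~ C x) B \/ d (fun x => A x /\ C x) B.
Proof.
  intros dAB; apply (proj1 (proj2 qp_d)); revert dAB; apply qp_mono; [| auto].
  intros x Ax; unfold setU; destruct (classic (C x)); auto.
Qed.

Lemma qp_split_r A B D :
  d A B -> d A (fun y => B y /\ ~ D y) \/ d A (fun y => B y /\ D y).
Proof.
  intros dAB; apply (proj1 qp_d); revert dAB; apply qp_mono; [auto |].
  intros y By; unfold setU; destruct (classic (D y)); auto.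
Qed.

(* Split A along C and B along D: the corner (A ∩ C) × (B ∩ D) cannot be near,
   since C is far from D. *)
Lemma qp_near_meets_Upairs (R : rel X) :
  (forall A B, d A B -> exists x y, A x /\ B y /\ R x y) ->
  forall l, Forall (far d) l -> forall A B, d A B ->
  exists x y, A x /\ B y /\ R x y /\ Upairs l x y.
Proof.
  intros meetR l; induction l as [| [C D] l IH]; intros farl A B dAB.
  - destruct (meetR A B dAB) as (x & y & Ax & By & Rxy).
    exists x, y; repeat split; auto; constructor.
  - apply Forall_cons_iff in farl as [farCD farl].
    destruct (qp_split_l A B C dAB) as [dAB' | dAB'].
    + destruct (IH farl _ _ dAB') as (x & y & [Ax nCx] & By & Rxy & Uxy).
      exists x, y; repeat split; auto; apply Upairs_cons; auto.
    + destruct (qp_split_r _ B D dAB') as [dAB'' | dAB''].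
      * destruct (IH farl _ _ dAB'') as (x & y & [Ax _] & [By nDy] & Rxy & Uxy).
        exists x, y; repeat split; auto; apply Upairs_cons; auto.
      * exfalso; apply farCD; revert dAB''; apply qp_mono; intros ? []; assumption.
Qed.

Lemma Vdelta_Upairs l : Forall (far d) l -> Vdelta d (Upairs l).
Proof. intros farl; exists l; split; [exact farl | intros x y h; exact h]. Qed.

Lemma Vdelta_prox A B : qu_prox (Vdelta d) A B <-> d A B.
Proof.
  split.
  - intros proxAB; apply NNPP; intros farAB.
    destruct (proxAB (Upairs [(A, B)])) as (x & y & Ax & By & Uxy).
    + apply Vdelta_Upairs; repeat constructor; exact farAB.
    + apply Upairs_cons in Uxy as [[] _]; auto.
  - intros dAB W (l & farl & UW).
    assert (meet_all : forall A B, d A B -> exists x y, A x /\ B y /\ True).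
    { intros A' B' dA'B'.
      destruct (qp_nonempty A' B' dA'B') as [[x Ax] [y By]]; exists x, y; auto. }
    destruct (qp_near_meets_Upairs _ meet_all l farl A B dAB)
      as (x & y & Ax & By & _ & Uxy).
    exists x, y; auto.
Qed.

Lemma Vdelta_qu : qu_transitive (Vdelta d) -> is_quasi_uniformity (Vdelta d).
Proof.
  intros trans; split; [| split; [| split; [| split]]].
  - exists []; split; [constructor | intros; exact I].
  - intros U V (l & farl & UW) UV; exists l; split; [exact farl |].
    intros x y h; apply UV, UW, h.
  - intros U V (l1 & farl1 & U1) (l2 & farl2 & U2).
    exists (l1 ++ l2); split; [apply Forall_app; auto |].
    intros x y h; apply Upairs_app in h as []; auto.
  - intros U (l & farl & UW) x; apply UW.
    refine (Forall_impl _ _ farl); intros [C D] farCD.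
    apply not_and_or, (qp_far_disjoint C D farCD).
  - apply qu_transitive_comp, trans.
Qed.

Lemma Vdelta_compatible tau : qp_compatible d tau -> qu_compatible (Vdelta d) tau.
Proof.
  intros compat G; split.
  - intros openG x Gx; exists (Upairs [(set1 x, setC G)]); split.
    + apply Vdelta_Upairs; repeat constructor; exact (proj1 (compat G) openG x Gx).
    + intros y Uxy; apply Upairs_cons in Uxy as [[nx | nGy] _].
      * exfalso; apply nx; reflexivity.
      * apply NNPP, nGy.
  - intros VG; apply compat; intros x Gx dxG.
    destruct (VG x Gx) as (W & VW & WG).
    destruct (proj2 (Vdelta_prox _ _) dxG W VW) as (x' & y & -> & nGy & Wxy).
    exact (nGy (WG y Wxy)).
Qed.

(* Each cell E is refined into E \ C and E \ D, which cover E since C and D are disjoint. *)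
Lemma Upairs_small_cover l :
  Forall (far d) l -> exists Es, small_cover (Upairs l) Es.
Proof.
  induction l as [| [C D] l IH]; intros farl.
  - exists [fun _ => True]; split.
    + intros x; exists (fun _ => True); split; [left |]; auto.
    + intros; constructor.
  - apply Forall_cons_iff in farl as [farCD farl].
    destruct (IH farl) as (Es & cover & small).
    exists (flat_map (fun E => [fun x => E x /\ ~ C x; fun x => E x /\ ~ D x]) Es).
    split.
    + intros x; destruct (cover x) as (E & inE & Ex).
      destruct (classic (C x)) as [Cx | nCx].
      * exists (fun x => E x /\ ~ D x); split.
        -- apply in_flat_map; exists E; split; [exact inE | right; left; reflexivity].
        -- split; [exact Ex |]; intros Dx; exact (qp_far_disjoint C D farCD x (conj Cx Dx)).
      * exists (fun x => E x /\ ~ C x); split.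
        -- apply in_flat_map; exists E; split; [exact inE | left; reflexivity].
        -- split; assumption.
    + intros E' inE' x y Ex Ey; apply in_flat_map in inE' as (E & inE & cell).
      destruct cell as [<- | [<- | []]]; apply Upairs_cons;
        destruct Ex, Ey; split; auto; apply (small E); assumption.
Qed.

Lemma Vdelta_totally_bounded : qu_totally_bounded (Vdelta d).
Proof.
  intros U (l & farl & UW).
  destruct (Upairs_small_cover l farl) as (Es & cover & small).
  exists Es; split; [exact cover |].
  intros E inE x y Ex Ey; apply UW, (small E); assumption.
Qed.

End QuasiProximity.

Section CoarsestElement.
Context {X : Type} {d : set X -> set X -> Prop}.

Lemma Vdelta_coarsest Q : in_pi d Q -> forall W, Vdelta d W -> Q W.
Proof.
  intros [(top & up & cap & _) prox] W (l & farl & UW).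
  apply (up (Upairs l)); [clear UW | exact UW].
  induction l as [| [C D] l IH].
  - apply (up _ _ top); intros; constructor.
  - apply Forall_cons_iff in farl as [farCD farl].
    assert (notprox : ~ qu_prox Q C D) by (intros h; apply farCD, prox, h).
    apply not_all_ex_not in notprox as (U & notprox).
    apply imply_to_and in notprox as [QU noUCD].
    apply (up _ _ (cap _ _ QU (IH farl))).
    intros x y [Uxy Ulxy]; apply Upairs_cons; split; [| exact Ulxy].
    apply not_and_or; intros [Cx Dy]; apply noUCD; eauto.
Qed.

Lemma totally_bounded_transitive_sub_Vdelta Q :
  in_pi d Q -> qu_transitive Q -> qu_totally_bounded Q ->
  forall U, Q U -> Vdelta d U.
Proof.
  intros [_ prox] trans tb U QU.
  destruct (trans U QU) as (V & QV & VU & transV).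
  destruct (tb V QV) as (Es & cover & small).
  exists (map (fun E => (E, fun y => ~ exists a, E a /\ V a y)) Es); split.
  - apply Forall_forall; intros p inp; apply in_map_iff in inp as (E & <- & _).
    intros dE; destruct (proj2 (prox _ _) dE V QV) as (x & y & Ex & nVy & Vxy).
    apply nVy; exists x; auto.
  - intros x y Uxy; destruct (cover x) as (E & inE & Ex).
    pose proof (proj1 (Forall_forall _ _) Uxy _ (in_map _ _ _ inE)) as [nEx | VEy];
      [contradiction |].
    apply NNPP in VEy as (a & Ea & Vay).
    apply VU, (transV x a y); [apply (small E) |]; assumption.
Qed.

Lemma two_in_pi_T_neq_Vdelta tau :
  two_in_pi_T d tau ->
  exists Q, in_pi d Q /\ in_T tau Q /\ ~ (forall W, Q W <-> Vdelta d W).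
Proof.
  intros (Q1 & Q2 & pi1 & T1 & pi2 & T2 & neq).
  destruct (classic (forall W, Q1 W <-> Vdelta d W)) as [eq1 | neq1].
  - exists Q2; split; [exact pi2 | split; [exact T2 |]].
    intros eq2; apply neq; intros W; rewrite eq1, eq2; reflexivity.
  - exists Q1; auto.
Qed.

End CoarsestElement.

Lemma qu_join_prox {X} (d1 d2 : set X -> set X -> Prop) Q :
  is_quasi_proximity d2 -> in_pi d1 Q -> qp_coarser d1 d2 ->
  forall A B, qu_prox (qu_join Q (Vdelta d2)) A B <-> d2 A B.
Proof.
  intros qp2 [quQ prox1] coarser A B; split.
  - intros proxAB; apply (Vdelta_prox qp2); intros W VW.
    apply proxAB, qu_join_r; assumption.
  - intros dAB R (U & W & QU & (l & farl & UW) & sub).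
    assert (meetU : forall A B, d2 A B -> exists x y, A x /\ B y /\ U x y).
    { intros A' B' dA'B'; exact (proj2 (prox1 _ _) (coarser _ _ dA'B') U QU). }
    destruct (qp_near_meets_Upairs qp2 U meetU l farl A B dAB)
      as (x & y & Ax & By & Uxy & Ulxy).
    exists x, y; repeat split; auto.
Qed.

Theorem corollary2p7 (X : Type) (tau : set X -> Prop)
  (d1 d2 : set X -> set X -> Prop) :
  is_topology tau ->
  is_quasi_proximity d1 -> qp_compatible d1 tau ->
  is_quasi_proximity d2 -> qp_compatible d2 tau ->
  qp_coarser d1 d2 ->
  qu_transitive (Vdelta d1) -> qu_transitive (Vdelta d2) ->
  two_in_pi_T d1 tau -> two_in_pi_T d2 tau.
Proof.
  intros _ _ _ qp2 compat2 coarser _ trans2 two1.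
  destruct (two_in_pi_T_neq_Vdelta tau two1) as (Q & piQ & (quQ & compatQ & transQ) & neqQ).
  pose proof (Vdelta_qu qp2 trans2) as quV.
  pose proof (Vdelta_compatible qp2 tau compat2) as compatV.
  exists (Vdelta d2), (qu_join Q (Vdelta d2)); split; [| split; [| split; [| split]]].
  - split; [exact quV | exact (Vdelta_prox qp2)].
  - split; [exact quV | split; [exact compatV | exact trans2]].
  - split; [apply qu_join_qu; assumption | exact (qu_join_prox d1 d2 Q qp2 piQ coarser)].
  - split; [apply qu_join_qu | split; [apply qu_join_compatible | apply qu_join_transitive]];
      assumption.
  - intros eqV; apply neqQ; intros W; split; [| apply (Vdelta_coarsest Q piQ)].
    apply (totally_bounded_transitive_sub_Vdelta Q piQ transQ).
    intros U QU; apply (Vdelta_totally_bounded qp2), eqV, qu_join_l; assumption.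
Qed.
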